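(* Let $M$ be a finite abelian group of exponent greater than $2$, and let $\mathrm{Half}(L_M)$ be the group of half-automorphisms of $L_M$. Then $$\mathrm{Half}(L_M)=\{F^+_{(f',f'',u,v)},\,F^-_{(f',f'',u,v)} : f'\in\mathrm{Aut}(K),\ f''\in\mathrm{Aut}(M),\ u,v\in M,\ u^2=v^2=1\}.$$ Moreover: (a) if $|M|$ is odd, then $|\mathrm{Half}(L_M)|=2\,|\mathrm{Aut}(K)|\,|\mathrm{Aut}(M)|$; (b) if $|M|$ is even and $M=C_{2i_1}\times\cdots\times C_{2i_s}\times M_1$ with $|M_1|$ odd, $s\geq1$, $i_j\geq 1$, then $|\mathrm{Half}(L_M)|=2^{2s+1}\,|\mathrm{Aut}(K)|\,|\mathrm{Aut}(M)|$.
   Context: $C_n$ denotes the cyclic group of order $n$. Let $K=\{1,a,b,c\}$ be the Klein four-group. Set $L_M=K\times M$ with the operation $(A,x)*(B,y)=(AB,xy)$ if $B=1$, and $(A,x)*(B,y)=(AB,x^{-1}y)$ if $B\neq 1$. For $u,v\in M$ with $u^2=v^2=1$, $\alpha_{(u,v)}:K\to M$ is defined by $\alpha_{(u,v)}(1)=1$, $\alpha_{(u,v)}(a)=u$, $\alpha_{(u,v)}(b)=v$, $\alpha_{(u,v)}(c)=uv$. For $f'\in\mathrm{Aut}(K)$, $f''\in\mathrm{Aut}(M)$ define $F^+_{(f',f'',u,v)}(A,x)=(f'(A),f''(x)\alpha_{(u,v)}(A))$ for all $(A,x)$, and $F^-_{(f',f'',u,v)}(1,x)=(1,f''(x))$,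 $F^-_{(f',f'',u,v)}(A,x)=(f'(A),f''(x^{-1})\alpha_{(u,v)}(A))$ for $A\neq 1$. A half-automorphism of a loop $L$ is a bijection $f:L\to L$ with $f(XY)\in\{f(X)f(Y),f(Y)f(X)\}$ for all $X,Y\in L$. *)

From mathcomp Require Import all_boot all_fingroup all_solvable.
Set Implicit Arguments. Unset Strict Implicit. Unset Printing Implicit Defensive.

(* Klein four-group K = {1,a,b,c}, encoded as bool*bool with componentwise xor. *)
Definition K : finType := (bool * bool)%type.
Definition k1 : K := (false, false).
Definition ka : K := (true, false).
Definition kb : K := (false, true).
Definition kc : K := (true, true).
Definition kmul (A B : K) : K := (addb A.1 B.1, addb A.2 B.2).

Definition autK : {set {perm K}} :=
  [set f : {perm K} | [forall A, forall B, f (kmul A B) == kmul (f A) (f B)]].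

Section LoopLM.
Variable M : finGroupType.
Local Open Scope group_scope.

Definition LM : finType := (K * M)%type.

Definition lmul (X Y : LM) : LM :=
  if Y.1 == k1 then (kmul X.1 Y.1, X.2 * Y.2)
  else (kmul X.1 Y.1, X.2^-1 * Y.2).

Definition alpha (u v : M) (A : K) : M :=
  if A == k1 then 1 else if A == ka then u else if A == kb then v else u * v.

Definition Fplus (f' : {perm K}) (f'' : {perm M}) (u v : M) (X : LM) : LM :=
  (f' X.1, f'' X.2 * alpha u v X.1).

Definition Fminus (f' : {perm K}) (f'' : {perm M}) (u v : M) (X : LM) : LM :=
  if X.1 == k1 then (k1, f'' X.2)
  else (f' X.1, f'' (X.2^-1) * alpha u v X.1).

Definition is_half_aut (f : LM -> LM) : Prop :=
  bijective f /\
  forall X Y, f (lmul X Y) = lmul (f X) (f Y) \/ f (lmul X Y) = lmul (f Y) (f X).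

Definition Half : {set {perm LM}} :=
  [set f : {perm LM} | [forall X, forall Y,
     (f (lmul X Y) == lmul (f X) (f Y)) || (f (lmul X Y) == lmul (f Y) (f X))]].

End LoopLM.

From mathcomp Require Import all_boot all_fingroup all_solvable ring.
Set Implicit Arguments. Unset Strict Implicit. Unset Printing Implicit Defensive.

(* A half-automorphism f satisfies (f (X Y)).1 = (f X).1 (f Y).1 whichever
   order is chosen, so its first component is an automorphism g of K; using an
   element of order > 2 one sees that f maps 1 x M onto itself through an
   automorphism h of M.  On a coset with A <> 1 the map is then
   (A, x) |-> (g A, u_A h(x)^(+-1)), and comparing the products of two distinct
   nontrivial cosets forces u_A^2 = 1, u_(AB) = u_A u_B and a sign that does not
   depend on A: f is F^+ or F^-.  Conversely every F^+ and F^- is a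
   half-automorphism, and (sign, f', f'', u, v) is read back from f, so
   |Half(L_M)| = 2 |Aut K| |Aut M| |T|^2 with T = {x | x^2 = 1}.  Finally
   |T| = 1 when |M| is odd and |T| = 2^s for M = C_(2i_1) x ... x C_(2i_s) x M_1. *)

Lemma kmulC A B : kmul A B = kmul B A.
Proof. by case: A B => [[] []] [[] []]. Qed.

Lemma kmulk1 A : kmul A k1 = A.
Proof. by case: A => [[] []]. Qed.

Lemma kmulkk A : kmul A A = k1.
Proof. by case: A => [[] []]. Qed.

Lemma kmul_eq1 A B : kmul A B = k1 -> A = B.
Proof. by case: A B => [[] []] [[] []]. Qed.

Lemma kmul_neq1 A B : A != B -> kmul A B != k1.
Proof. by apply: contra => /eqP /kmul_eq1 ->. Qed.

Section GroupFacts.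
Variable G : finGroupType.
Local Open Scope group_scope.

Lemma expg2E (x : G) : x ^+ 2 = x * x.
Proof. by rewrite expgS expg1. Qed.

Lemma exists_sq_neq1 : 2 < exponent [set: G] -> exists w : G, w * w != 1.
Proof.
move=> expG; apply/existsP; apply: contraTT expG => /existsPn sq1.
rewrite -leqNgt; apply: dvdn_leq => //; apply/exponentP => x _.
by have := sq1 x; rewrite negbK expg2E => /eqP.
Qed.

Lemma mul_pm_eq1 (p q P : G) :
  p != q -> p = P \/ p = P^-1 -> q = P^-1 \/ q = P -> p * q = 1.
Proof.
by move=> npq [] Ep [] Eq; rewrite Ep Eq ?mulgV ?mulVg //; move: npq; rewrite Ep Eq eqxx.
Qed.

Variable h : G -> G.
Hypothesis hM : forall x y, h (x * y) = h x * h y.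

Lemma hom1 : h 1 = 1.
Proof. by apply: (mulgI (h 1)); rewrite -hM !mulg1. Qed.

Lemma homV x : h x^-1 = (h x)^-1.
Proof. by apply: (mulIg (h x)); rewrite -hM !mulVg hom1. Qed.

End GroupFacts.

Section AbelianGroup.
Variable M : finGroupType.
Hypothesis abelM : abelian [set: M].
Local Open Scope group_scope.

Lemma mulgC (x y : M) : x * y = y * x.
Proof. exact: (centsP abelM) x (in_setT x) y (in_setT y). Qed.

Lemma mulgCA (x y z : M) : x * (y * z) = y * (x * z).
Proof. by rewrite !mulgA (mulgC x). Qed.

Lemma mulgAC (x y z : M) : x * y * z = x * z * y.
Proof. by rewrite -!mulgA (mulgC y). Qed.

Lemma invMgC (x y : M) : (x * y)^-1 = x^-1 * y^-1.
Proof. by rewrite invMg mulgC. Qed.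

Lemma mulVg_cancel (v p q : M) : (v * p)^-1 * (v * q) = p^-1 * q.
Proof. by rewrite invMgC mulgA (mulgC v^-1) mulgKV. Qed.

Lemma mul_pm_pair (v z : M) : v * z * (v * z^-1) = v * v.
Proof. by rewrite mulgA (mulgAC v z v) mulgK. Qed.

Lemma eq_of_mulVg (u1 u2 p q : M) :
  u1 * u1 = 1 -> (u1 * p)^-1 * (u2 * q) = u1 * u2 -> p = q.
Proof.
move=> u1sq; rewrite invMgC.
have -> : u1^-1 = u1 by apply/eqP; rewrite eq_invg_mul u1sq.
rewrite !mulgA (mulgAC u1 p^-1 u2) -(mulgA (u1 * u2)) -{2}(mulg1 (u1 * u2)).
by move/mulgI/eqP; rewrite -eq_mulVg1 => /eqP.
Qed.

Definition powpm (b : bool) (z : M) := if b then z else z^-1.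

Lemma powpm_comp b c z : powpm b (powpm c z) = powpm (b == c) z.
Proof. by case: b c => [] [] //=; rewrite invgK. Qed.

Lemma powpmM b p q : powpm b (p * q) = powpm b p * powpm b q.
Proof. by case: b => //=; rewrite invMgC. Qed.

Lemma powpm1 b : powpm b 1 = 1.
Proof. by case: b => //=; rewrite invg1. Qed.

Lemma powpmV b z : powpm b z^-1 = (powpm b z)^-1.
Proof. by case: b. Qed.

Lemma powpm_id b z : z * z = 1 -> powpm b z = z.
Proof. by case: b => //= zsq; apply/eqP; rewrite eq_invg_mul zsq. Qed.

Lemma powpm_inj b : injective (powpm b).
Proof. by case: b => //; apply: invg_inj. Qed.

Lemma powpm_sq_neq1 s z : z * z != 1 -> powpm s z * powpm s z != 1.
Proof.
move=> zsq; apply: contra zsq => /eqP sq1; apply/eqP; apply: (@powpm_inj s).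
by rewrite powpmM sq1 powpm1.
Qed.

Lemma lmulE (X Y : LM M) :
  lmul X Y = (kmul X.1 Y.1, powpm (Y.1 == k1) X.2 * Y.2).
Proof. by rewrite /lmul; case: ifP. Qed.

Definition sqrt1 := [set x : M | x ^+ 2 == 1].

Lemma sqrt1_group_set : group_set sqrt1.
Proof.
apply/group_setP; split; first by rewrite inE expg1n.
move=> x y; rewrite !inE => /eqP x2 /eqP y2.
by rewrite expgMn ?x2 ?y2 ?mulg1 //; exact: mulgC.
Qed.
Canonical sqrt1_group := Group sqrt1_group_set.

Lemma sqrt1_odd (H : {group M}) : odd #|H| -> H :&: sqrt1 = 1.
Proof.
move=> oddH; apply/setP => x; rewrite !inE; apply/andP/eqP => [[Hx /eqP x2]|->].
  apply/eqP; rewrite -order_eq1 -dvdn1.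
  have /eqP <- : coprime 2 #|H| by rewrite coprime2n.
  by rewrite dvdn_gcd order_dvdn x2 eqxx order_dvdG.
by rewrite group1 expg1n.
Qed.

Lemma card_sqrt1_dprod A B (H : {group M}) :
  A \x B = H -> #|H :&: sqrt1| = (#|A :&: sqrt1| * #|B :&: sqrt1|)%N.
Proof.
move=> defH; have [[A0 B0 -> ->] <- _ tiAB] := dprodP defH.
have tiT : (A0 :&: sqrt1_group)%G :&: (B0 :&: sqrt1_group)%G = 1.
  by apply/trivgP; rewrite -tiAB; apply: setISS; exact: subsetIl.
rewrite -(TI_cardMg tiT) /=; apply: eq_card => x; apply/idP/idP.
  rewrite inE => /andP[/mulsgP[a b Aa Bb ->]].
  rewrite inE expgMn; last exact: mulgC.
  move=> /eqP ab2; have a2V : a ^+ 2 = (b ^+ 2)^-1.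
    by apply/eqP; rewrite eq_mulgV1 invgK ab2.
  have : a ^+ 2 \in A0 :&: B0 by rewrite inE groupX //= a2V groupV groupX.
  rewrite tiAB inE => /eqP a2.
  have b2 : b ^+ 2 = 1 by apply: invg_inj; rewrite -a2V a2 invg1.
  by apply: mem_mulg; rewrite !inE ?Aa ?Bb ?a2 ?b2 eqxx.
case/mulsgP=> a b; rewrite !inE => /andP[Aa /eqP a2] /andP[Bb /eqP b2] ->.
by rewrite mem_mulg //= expgMn ?a2 ?b2 ?mulg1 //; exact: mulgC.
Qed.

Lemma card_sqrt1_bigdprod I r (P : pred I) E (H : {group M}) :
  \big[dprod/1]_(i <- r | P i) E i = H ->
  (\prod_(i <- r | P i) #|E i :&: sqrt1|)%N = #|H :&: sqrt1|.
Proof.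
elim/big_rec2: _ H => [H <- | i A B _ IH H defH].
  by rewrite setI1g cards1.
have [[_ C _ defC] _ _ _] := dprodP defH.
by rewrite (card_sqrt1_dprod defH) (IH C) defC.
Qed.

Lemma card_sqrt1_cycle (g : M) i : 0 < i -> #[g] = (2 * i)%N ->
  #|<[g]> :&: sqrt1| = 2.
Proof.
move=> i_gt0 og.
have gi_neq1 : g ^+ i != 1.
  rewrite -order_dvdn og; apply/negP => /dvdn_leq => /(_ i_gt0).
  by rewrite -{2}(mul1n i) leq_pmul2r // ltnn.
suff -> : <[g]> :&: sqrt1 = [set 1; g ^+ i] by rewrite cards2 eq_sym gi_neq1.
apply/setP => x; rewrite !inE; apply/andP/orP.
  case=> /cyclePmin [k k_lt ->]; rewrite -expgM -order_dvdn og (mulnC k).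
  rewrite dvdn_pmul2l // => /dvdnP [m km].
  move: k_lt; rewrite og km ltn_pmul2r //.
  by case: m {km} => [|[|m]] //= _; [left; rewrite mul0n | right; rewrite mul1n].
case=> /eqP ->; first by rewrite group1 expg1n.
by rewrite mem_cycle -expgM mulnC -og expg_order.
Qed.

Lemma card_sqrt1_even_cycles s (g : 'I_s -> M) (M1 : {group M}) :
  (forall j, exists2 i, 0 < i & #[g j] = (2 * i)%N) -> odd #|M1| ->
  (\big[dprod/1]_(j < s) <[g j]>) \x M1 = [set: M] -> #|sqrt1| = (2 ^ s)%N.
Proof.
move=> g_even oddM1 defM; have [[B _ defB _] _ _ _] := dprodP defM.
rewrite -(setTI sqrt1) (card_sqrt1_dprod defM) (sqrt1_odd oddM1).
rewrite cards1 muln1 defB -(card_sqrt1_bigdprod defB).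
rewrite (eq_bigr (fun _ => 2)) ?prod_nat_const ?card_ord // => j _.
by have [i i_gt0 og] := g_even j; exact: card_sqrt1_cycle i_gt0 og.
Qed.

Definition Fsign (b : bool) := if b then @Fplus M else @Fminus M.

Section HalfAutForm.
Variable f : LM M -> LM M.
Hypothesis f_inj : injective f.
Hypothesis f_half : forall X Y,
  f (lmul X Y) = lmul (f X) (f Y) \/ f (lmul X Y) = lmul (f Y) (f X).
Variable w : M.
Hypothesis w_sq : w * w != 1.

Lemma half_fst X Y : (f (lmul X Y)).1 = kmul (f X).1 (f Y).1.
Proof. by case: (f_half X Y) => ->; rewrite !lmulE //= kmulC. Qed.

Lemma half_unit : f (k1, 1) = (k1, 1).
Proof.
have E : lmul (k1, 1) (k1, 1) = (k1, 1 : M) by rewrite lmulE /= mulg1.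
have : f (k1, 1) = lmul (f (k1, 1)) (f (k1, 1)) by case: (f_half (k1, 1) (k1, 1)); rewrite E.
case: (f (k1, 1)) => A x; rewrite lmulE /= kmulkk => -[-> x_id].
by congr (_, _); apply: (mulgI x); rewrite mulg1 {3}x_id.
Qed.

Lemma half_fst_k1_sq x : x * x != 1 -> (f (k1, x)).1 = k1.
Proof.
move=> x_sq; apply/eqP; apply: contraNT x_sq => fx_neq1.
have : f (lmul (k1, x) (k1, x)) = f (k1, 1).
  rewrite half_unit.
  have -> : f (lmul (k1, x) (k1, x)) = lmul (f (k1, x)) (f (k1, x)).
    by case: (f_half (k1, x) (k1, x)).
  by rewrite lmulE kmulkk (negbTE fx_neq1) /= mulVg.
by move/f_inj; rewrite lmulE /= => -[->].
Qed.

(* If x^2 = 1 then x = (w x) w^-1, with both factors of order > 2. *)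
Lemma half_fst_k1 x : (f (k1, x)).1 = k1.
Proof.
case: (boolP (x * x == 1)) => x_sq; last exact: half_fst_k1_sq.
have E : lmul (k1, w * x) (k1, w^-1) = (k1, x).
  by rewrite lmulE /= mulgC mulgA mulVg mul1g.
rewrite -E half_fst !half_fst_k1_sq //; first by rewrite -invMgC eq_invg1.
by rewrite mulgA (mulgAC w x w) -mulgA (eqP x_sq) mulg1.
Qed.

Definition h x := (f (k1, x)).2.

Lemma half_k1 x : f (k1, x) = (k1, h x).
Proof. by have := half_fst_k1 x; rewrite /h; case: (f (k1, x)) => A y /= ->. Qed.

Lemma hM x y : h (x * y) = h x * h y.
Proof.
have E : lmul (k1, x) (k1, y) = (k1, x * y) by rewrite lmulE.
case: (f_half (k1, x) (k1, y)); rewrite E !half_k1 !lmulE /= => -[] // ->.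
exact: mulgC.
Qed.

Lemma h_inj : injective h.
Proof.
move=> x y hxy; have : f (k1, x) = f (k1, y) by rewrite !half_k1 hxy.
by move/f_inj => [].
Qed.

Lemma h_sq_neq1 x : x * x != 1 -> h x * h x != 1.
Proof.
move=> x_sq; rewrite -hM; apply: contra x_sq => /eqP hx1.
by apply/eqP/h_inj; rewrite hx1 (hom1 hM).
Qed.

Definition g A := (f (A, 1)).1.

Lemma half_fst_g A x : (f (A, x)).1 = g A.
Proof.
have E : lmul (A, 1) (k1, x) = (A, x) by rewrite lmulE /= mul1g kmulk1.
by rewrite -E half_fst half_fst_k1 kmulk1.
Qed.

Lemma gM A B : g (kmul A B) = kmul (g A) (g B).
Proof.
have E : lmul (A, 1) (B, 1) = (kmul A B, 1 : M) by rewrite lmulE /= powpm1 mulg1.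
by rewrite /g -E half_fst.
Qed.

Lemma g_neq1 A : A != k1 -> g A != k1.
Proof.
move=> A_neq1; apply: contra A_neq1 => /eqP gA.
have [hi hK hiK] := injF_bij h_inj.
have : f (A, 1) = f (k1, hi (f (A, 1)).2).
  by rewrite half_k1 hiK -gA /g -surjective_pairing.
by move/f_inj => [->].
Qed.

Lemma g_inj : injective g.
Proof.
move=> A B gAB; case: (eqVneq (kmul A B) k1) => [/kmul_eq1 //|/g_neq1].
by rewrite gM gAB kmulkk eqxx.
Qed.

Definition u A := (f (A, 1)).2.

Lemma half_coset A x : f (A, x) = (g A, (f (A, x)).2).
Proof. by rewrite -(half_fst_g A x) -surjective_pairing. Qed.

Lemma half_coset_pm A x : A != k1 -> exists b, (f (A, x)).2 = u A * powpm b (h x).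
Proof.
move=> A_neq1.
have E : lmul (A, 1) (k1, x) = (A, x) by rewrite lmulE /= mul1g kmulk1.
have := f_half (A, 1) (k1, x); rewrite E half_k1 (half_coset A 1) !lmulE.
move=> -[] /(congr1 snd) /= ->; first by exists true.
by exists false; rewrite (negbTE (g_neq1 A_neq1)) /= mulgC.
Qed.

Lemma half_same_coset A x y : A != k1 ->
  h (x^-1 * y) = ((f (A, x)).2)^-1 * (f (A, y)).2 \/
  h (x^-1 * y) = ((f (A, y)).2)^-1 * (f (A, x)).2.
Proof.
move=> A_neq1.
have E : lmul (A, x) (A, y) = (k1, x^-1 * y) by rewrite lmulE /= kmulkk (negbTE A_neq1).
have := f_half (A, x) (A, y).
rewrite E half_k1 (half_coset A x) (half_coset A y) !lmulE /= (negbTE (g_neq1 A_neq1)).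
by move=> -[] /(congr1 snd) /= ->; [left|right].
Qed.

(* If the signs at w and at y differed, the product (A, w) (A, y) would force
   h(w)^2 = 1. *)
Lemma half_coset_sign A : A != k1 ->
  exists b, forall x, (f (A, x)).2 = u A * powpm b (h x).
Proof.
move=> A_neq1; have hw_sq := h_sq_neq1 w_sq; set a := h w in hw_sq.
have [b fAw] := half_coset_pm w A_neq1; exists b => y.
have [c fAy] := half_coset_pm y A_neq1.
case: (eqVneq b c) => [-> //|nbc].
have := half_same_coset w y A_neq1.
rewrite fAw fAy hM (homV hM) !mulVg_cancel -/a.
case: b c nbc {fAw fAy} => [] [] // _ /=; rewrite ?invgK => -[] E.
- by move/mulgI: E => E; rewrite -E.
- by move: E; rewrite (mulgC _ a) => /mulIg aV; move: hw_sq; rewrite -{1}aV mulVg eqxx.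
- by move/mulIg: E => aV; move: hw_sq; rewrite -{1}aV mulVg eqxx.
- by move: E; rewrite (mulgC (h y)^-1) => /mulgI <-.
Qed.

Lemma half_distinct_cosets A B x y : A != k1 -> B != k1 -> A != B ->
  (f (kmul A B, x^-1 * y)).2 = ((f (A, x)).2)^-1 * (f (B, y)).2 \/
  (f (kmul A B, x^-1 * y)).2 = ((f (B, y)).2)^-1 * (f (A, x)).2.
Proof.
move=> A_neq1 B_neq1 AB.
have E : lmul (A, x) (B, y) = (kmul A B, x^-1 * y) by rewrite lmulE /= (negbTE B_neq1).
have := f_half (A, x) (B, y).
rewrite E (half_coset A x) (half_coset B y) !lmulE /=.
rewrite (negbTE (g_neq1 B_neq1)) (negbTE (g_neq1 A_neq1)).
by move=> -[] /(congr1 snd) /= ->; [left|right].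
Qed.

(* With b = h w and P = u_A^-1 u_B b^(+-1), the products (A, 1) (B, w) and
   (B, w) (A, 1) give u_(AB) b^(+-1) and u_(AB) b^(-+1) in {P, P^-1}; they are
   distinct since b^2 <> 1, so their product u_(AB)^2 is 1. *)
Lemma u_sq_prod A B : A != k1 -> B != k1 -> A != B ->
  u (kmul A B) * u (kmul A B) = 1.
Proof.
move=> A_neq1 B_neq1 AB; have C_neq1 := kmul_neq1 AB; set C := kmul A B in C_neq1 *.
have [sA fA] := half_coset_sign A_neq1; have [sB fB] := half_coset_sign B_neq1.
have [sC fC] := half_coset_sign C_neq1.
set b := h w; have b_sq : b * b != 1 by exact: h_sq_neq1.
set P := (u A)^-1 * (u B * powpm sB b).
have E1 : u C * powpm sC b = P \/ u C * powpm sC b = P^-1.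
  case: (half_distinct_cosets 1 w A_neq1 B_neq1 AB);
    rewrite -/C fC fA fB invg1 mul1g (hom1 hM) powpm1 mulg1 => ->; first by left.
  by right; rewrite -/b /P [in RHS]invMg invgK.
have E2 : u C * (powpm sC b)^-1 = P^-1 \/ u C * (powpm sC b)^-1 = P.
  have BA : B != A by rewrite eq_sym.
  case: (half_distinct_cosets w 1 B_neq1 A_neq1 BA);
    rewrite kmulC -/C fC fA fB mulg1 (homV hM) (hom1 hM) powpm1 mulg1 powpmV => ->.
    by left; rewrite -/b /P [in RHS]invMg invgK.
  by right.
rewrite -(mul_pm_pair (u C) (powpm sC b)); apply: mul_pm_eq1 E1 E2.
apply: contra (powpm_sq_neq1 sC b_sq) => /eqP /mulgI E.
by rewrite {2}E mulgV.
Qed.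

Lemma u_sq A : A != k1 -> u A * u A = 1.
Proof.
case: A => [[] []] // _.
- exact: (@u_sq_prod ka kb).
- exact: (@u_sq_prod kb kc).
- exact: (@u_sq_prod ka kc).
Qed.

Lemma u_inv A : A != k1 -> (u A)^-1 = u A.
Proof. by move=> A_neq1; apply/eqP; rewrite eq_invg_mul u_sq. Qed.

Lemma uM A B : A != k1 -> B != k1 -> A != B -> u (kmul A B) = u A * u B.
Proof.
move=> A_neq1 B_neq1 AB.
case: (half_distinct_cosets 1 1 A_neq1 B_neq1 AB).
all: rewrite invg1 mulg1 -/(u A) -/(u B) -/(u (kmul A B)) => ->.
  by rewrite u_inv.
by rewrite u_inv // mulgC.
Qed.

Lemma half_coset_sign_eq A B sA sB : A != k1 -> B != k1 -> A != B ->
  (forall x, (f (A, x)).2 = u A * powpm sA (h x)) ->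
  (forall x, (f (B, x)).2 = u B * powpm sB (h x)) -> sA = sB.
Proof.
move=> A_neq1 B_neq1 AB fA fB.
set b := h w; have b_sq : b * b != 1 by exact: h_sq_neq1.
suff : powpm sA b = powpm sB b.
  case: sA sB {fA fB} => [] [] //= E; exfalso; move: b_sq.
    by rewrite {2}E mulgV eqxx.
  by rewrite -{1}E mulVg eqxx.
case: (half_distinct_cosets w w A_neq1 B_neq1 AB).
all: rewrite mulVg -/(u (kmul A B)) uM // fA fB.
  by move/esym/eq_of_mulVg; apply; apply: u_sq.
by rewrite (mulgC (u A)) => /esym/eq_of_mulVg E; apply/esym/E/u_sq.
Qed.

Lemma half_aut_form : exists b (f' : {perm K}) (f'' : {perm M}) (u0 v0 : M),
  [/\ f' \in autK, f'' \in Aut [set: M], u0 ^+ 2 = 1, v0 ^+ 2 = 1 &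
      f =1 Fsign b f' f'' u0 v0].
Proof.
have Ka : ka != k1 by []. have Kb : kb != k1 by []. have Kc : kc != k1 by [].
have [sa fa] := half_coset_sign Ka; have [sb fb] := half_coset_sign Kb.
have [sc fc] := half_coset_sign Kc.
have sab : sa = sb by apply: (half_coset_sign_eq (A := ka) (B := kb)).
have sac : sa = sc by apply: (half_coset_sign_eq (A := ka) (B := kc)).
rewrite -{}sab in fb; rewrite -{}sac in fc.
have uc : u kc = u ka * u kb by apply: (uM (A := ka) (B := kb)).
exists sa, (perm g_inj), (perm h_inj), (u ka), (u kb); split.
- by rewrite inE; apply/forallP => A; apply/forallP => B; rewrite !permE gM.
- rewrite inE; apply/andP; split; first by apply/subsetP => x _; exact: in_setT.
  by apply/morphicP => x y _ _; rewrite !permE hM.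
- by rewrite expg2E u_sq.
- by rewrite expg2E u_sq.
case=> A x; case: sa fa fb fc => fa fb fc; case: A => [[] []].
all: rewrite /Fsign /Fplus /Fminus /= !permE.
- by rewrite (half_coset kc x) fc uc mulgC.
- by rewrite (half_coset ka x) fa mulgC.
- by rewrite (half_coset kb x) fb mulgC.
- by rewrite half_k1 /g half_unit mulg1.
- by rewrite (half_coset kc x) fc uc (homV hM) mulgC.
- by rewrite (half_coset ka x) fa (homV hM) mulgC.
- by rewrite (half_coset kb x) fb (homV hM) mulgC.
- by rewrite half_k1.
Qed.

End HalfAutForm.

Lemma eq_is_half_aut (f1 f2 : LM M -> LM M) :
  f1 =1 f2 -> is_half_aut f2 -> is_half_aut f1.
Proof.
move=> f12 [/bij_inj f2_inj f2_half]; split.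
  by apply: injF_bij => X Y; rewrite !f12 => /f2_inj.
by move=> X Y; rewrite !f12; apply: f2_half.
Qed.

Section SignedMaps.
Variables (f' : {perm K}) (f'' : {perm M}) (u0 v0 : M).
Hypothesis f'_aut : f' \in autK.
Hypothesis f''_aut : f'' \in Aut [set: M].
Hypothesis u0_sq : u0 * u0 = 1.
Hypothesis v0_sq : v0 * v0 = 1.

Lemma f'M A B : f' (kmul A B) = kmul (f' A) (f' B).
Proof. by move: f'_aut; rewrite inE => /forallP /(_ A) /forallP /(_ B) /eqP. Qed.

Lemma f'1 : f' k1 = k1.
Proof. by rewrite -{1}(kmulkk k1) f'M kmulkk. Qed.

Lemma f'_eq1 A : (f' A == k1) = (A == k1).
Proof. by rewrite -{1}f'1 (inj_eq perm_inj). Qed.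

Lemma f''M x y : f'' (x * y) = f'' x * f'' y.
Proof. by have /morphicP := Aut_morphic f''_aut; apply; rewrite inE. Qed.

Lemma f''_powpm b x : f'' (powpm b x) = powpm b (f'' x).
Proof. by case: b => //=; rewrite (homV f''M). Qed.

Notation al := (alpha u0 v0).

Lemma alphaM A B : al (kmul A B) = al A * al B.
Proof.
case: A B => [[] []] [[] []]; rewrite /alpha /= ?mul1g ?mulg1 ?u0_sq ?v0_sq //.
all: first [ by rewrite mulgA (mulgAC u0 v0 u0) u0_sq mul1g v0_sq
           | by rewrite (mulgAC u0 v0 u0) u0_sq mul1g
           | by rewrite -mulgA v0_sq mulg1
           | by rewrite mulgA u0_sq mul1g
           | by rewrite mulgCA v0_sq mulg1
           | exact: mulgC ].
Qed.

Lemma powpm_alpha b A : powpm b (al A) = al A.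
Proof. by apply: powpm_id; rewrite -alphaM kmulkk. Qed.

Definition signed_map (sg : K -> bool) (X : LM M) : LM M :=
  (f' X.1, powpm (sg X.1) (f'' X.2) * al X.1).

(* The first alternative makes the signed map multiplicative on (A, x) (B, y),
   the second one anti-multiplicative. *)
Definition sign_compatible (sg : K -> bool) := forall A B,
  (sg (kmul A B) = sg A /\ sg (kmul A B) = sg B) \/
  ((sg (kmul A B) == (B == k1)) = sg A /\ sg (kmul A B) = ((A == k1) == sg B)).

Lemma signed_map_inj sg : injective (signed_map sg).
Proof.
move=> [A x] [B y]; rewrite /signed_map /= => -[/perm_inj AB].
by rewrite AB => /mulIg /powpm_inj /perm_inj ->.
Qed.

Lemma signed_map_half sg : sign_compatible sg -> forall X Y,
  signed_map sg (lmul X Y) = lmul (signed_map sg X) (signed_map sg Y) \/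
  signed_map sg (lmul X Y) = lmul (signed_map sg Y) (signed_map sg X).
Proof.
move=> sg_comp [A x] [B y].
have -> : signed_map sg (lmul (A, x) (B, y)) = (kmul (f' A) (f' B),
    powpm (sg (kmul A B) == (B == k1)) (f'' x) * powpm (sg (kmul A B)) (f'' y)
      * (al A * al B)).
  by rewrite /signed_map lmulE /= f'M f''M f''_powpm powpmM powpm_comp alphaM.
have -> : lmul (signed_map sg (A, x)) (signed_map sg (B, y)) =
    (kmul (f' A) (f' B),
     powpm ((B == k1) == sg A) (f'' x) * powpm (sg B) (f'' y) * (al A * al B)).
  rewrite /signed_map lmulE /= f'_eq1 powpmM powpm_comp powpm_alpha.
  by rewrite !mulgA (mulgAC _ (al A)).
have -> : lmul (signed_map sg (B, y)) (signed_map sg (A, x)) =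
    (kmul (f' A) (f' B),
     powpm (sg A) (f'' x) * powpm ((A == k1) == sg B) (f'' y) * (al A * al B)).
  rewrite /signed_map lmulE /= f'_eq1 powpmM powpm_comp powpm_alpha kmulC.
  by congr (_, _); rewrite mulgC -!mulgA; congr (_ * _); apply: mulgCA.
case: (sg_comp A B) => -[-> ->]; [left|right] => //.
by rewrite eq_sym.
Qed.

Lemma Fsign_signed_map b : exists2 sg, sign_compatible sg &
  Fsign b f' f'' u0 v0 =1 signed_map sg.
Proof.
case: b.
  by exists (fun _ => true) => //; left.
exists (fun A => A == k1).
  by move=> A B; case: A B => [[] []] [[] []]; first [by left | by right].
case=> A x; rewrite /Fsign /Fminus /signed_map /=; case: eqP => [->|_] /=.
  by rewrite f'1 /alpha eqxx mulg1.
by rewrite (homV f''M).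
Qed.

Lemma Fsign_half_aut b : is_half_aut (Fsign b f' f'' u0 v0).
Proof.
have [sg sg_comp /eq_is_half_aut] := Fsign_signed_map b; apply; split.
  exact/injF_bij/signed_map_inj.
exact: signed_map_half.
Qed.

End SignedMaps.

Section ExponentGt2.
Hypothesis expM : 2 < exponent [set: M].

Lemma half_aut_Fsign f : is_half_aut f <->
  exists b (f' : {perm K}) (f'' : {perm M}) (u0 v0 : M),
    [/\ f' \in autK, f'' \in Aut [set: M], u0 ^+ 2 = 1, v0 ^+ 2 = 1 &
        f =1 Fsign b f' f'' u0 v0].
Proof.
split.
  move=> [/bij_inj f_inj f_half]; have [w w_sq] := exists_sq_neq1 expM.
  exact: half_aut_form f_inj f_half _ w_sq.
move=> [b [f' [f'' [u0 [v0 [f'_aut f''_aut u0_sq v0_sq /eq_is_half_aut]]]]]].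
by apply; apply: Fsign_half_aut; rewrite // -expg2E.
Qed.

Lemma mem_Half (p : {perm LM M}) : p \in Half M <-> is_half_aut p.
Proof.
rewrite inE; split.
  move=> /forallP p_half; split; first exact: (injF_bij (@perm_inj _ p)).
  by move=> X Y; have /forallP /(_ Y) /orP [/eqP|/eqP] := p_half X; [left|right].
move=> [_ p_half]; apply/forallP => X; apply/forallP => Y.
by case: (p_half X Y) => ->; rewrite eqxx ?orbT.
Qed.

(* The sign records whether (p (a, x)).2 = (p (1, x)).2 (p (a, 1)).2 for all x,
   which holds for F^+ and fails for F^- at any x with x^2 <> 1. *)
Definition half_params (p : {perm LM M}) :
    bool * {ffun K -> K} * {ffun M -> M} * M * M :=
  ([forall x, (p (ka, x)).2 == (p (k1, x)).2 * (p (ka, 1)).2],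
   [ffun A => (p (A, 1)).1], [ffun x => (p (k1, x)).2], (p (ka, 1)).2, (p (kb, 1)).2).

Lemma half_paramsE (p : {perm LM M}) b f' f'' u0 v0 :
  f' \in autK -> f'' \in Aut [set: M] ->
  p =1 Fsign b f' f'' u0 v0 -> half_params p = (b, val f', val f'', u0, v0).
Proof.
move=> f'_aut f''_aut pE.
have f''1 := hom1 (f''M f''_aut).
rewrite /half_params; congr (_, _, _, _, _).
- case: b pE => pE.
    by apply/forallP => x; rewrite !pE /= /Fplus /= f''1 mul1g mulg1.
  have [w w_sq] := exists_sq_neq1 expM.
  apply/negP => /forallP /(_ w) /eqP; rewrite !pE /= /Fminus /= invg1 f''1 mul1g.
  rewrite (homV (f''M f''_aut)) => /mulIg fw.
  have : f'' (w * w) == 1 by rewrite (f''M f''_aut) -{1}fw mulVg.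
  by rewrite -f''1 (inj_eq perm_inj) => /eqP ww1; rewrite ww1 eqxx in w_sq.
- apply/ffunP => A; rewrite ffunE pE pvalE; case: b {pE} => //=.
  by rewrite /Fminus /=; case: (A =P k1) => [->|_] //=; rewrite (f'1 f'_aut).
- by apply/ffunP => x; rewrite ffunE pE pvalE; case: b {pE} => //=; rewrite mulg1.
- by rewrite pE; case: b {pE} => /=; rewrite /Fplus /Fminus /= ?invg1 f''1 mul1g.
- by rewrite pE; case: b {pE} => /=; rewrite /Fplus /Fminus /= ?invg1 f''1 mul1g.
Qed.

Lemma half_params_inj : {in Half M &, injective half_params}.
Proof.
move=> p1 p2 /mem_Half /half_aut_Fsign [b1 [f1' [f1'' [u1 [v1 [f1'_aut f1''_aut _ _ p1E]]]]]].
move=> /mem_Half /half_aut_Fsign [b2 [f2' [f2'' [u2 [v2 [f2'_aut f2''_aut _ _ p2E]]]]]].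
rewrite (half_paramsE f1'_aut f1''_aut p1E) (half_paramsE f2'_aut f2''_aut p2E).
move=> [eb /val_inj ef' /val_inj ef'' eu ev]; subst.
by apply/permP => X; rewrite p1E p2E.
Qed.

Definition params := setX (setX (setX (setX [set: bool] [set val f | f in autK])
  [set val f | f in Aut [set: M]]) sqrt1) sqrt1.

Lemma half_params_image : half_params @: Half M = params.
Proof.
apply/setP => t; apply/imsetP/idP.
  case=> p /mem_Half /half_aut_Fsign [b [f' [f'' [u0 [v0 [f'_aut f''_aut u0_sq v0_sq pE]]]]]] ->.
  rewrite (half_paramsE f'_aut f''_aut pE) !in_setX in_setT !imset_f // !inE.
  by rewrite u0_sq v0_sq eqxx.
case: t => [[[[b F'] F''] u0] v0].
rewrite !in_setX => /andP[/andP[/andP[/andP[_ /imsetP [f' f'_aut ->]]]]].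
move=> /imsetP [f'' f''_aut ->]; rewrite !inE => /eqP u0_sq /eqP v0_sq.
have [F_inj _] : is_half_aut (Fsign b f' f'' u0 v0).
  by apply/half_aut_Fsign; exists b, f', f'', u0, v0.
exists (perm (bij_inj F_inj)); last by rewrite (half_paramsE f'_aut f''_aut (permE _)).
apply/mem_Half/(eq_is_half_aut (permE _))/half_aut_Fsign.
by exists b, f', f'', u0, v0.
Qed.

Lemma card_Half :
  #|Half M| = (2 * #|autK| * #|Aut [set: M]| * #|sqrt1| * #|sqrt1|)%N.
Proof.
rewrite -(card_in_imset half_params_inj) half_params_image.
by rewrite !cardsX cardsT card_bool !card_imset //; exact: val_inj.
Qed.

End ExponentGt2.
End AbelianGroup.

Theorem theorem4p13 (M : finGroupType)
  (HabM : abelian [set: M]) (Hexp : 2 < exponent [set: M]) :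
  (forall f : LM M -> LM M,
     is_half_aut f <->
     exists (f' : {perm K}) (f'' : {perm M}) (u v : M),
       [/\ f' \in autK, f'' \in Aut [set: M], (u ^+ 2 = 1)%g, (v ^+ 2 = 1)%g &
           (f =1 Fplus f' f'' u v \/ f =1 Fminus f' f'' u v)])
  /\ (odd #|M| -> #|Half M| = 2 * #|autK| * #|Aut [set: M]|)
  /\ (forall (s : nat) (g : 'I_s -> M) (M1 : {group M}),
        ~~ odd #|M| -> 0 < s ->
        (forall j, exists2 i, 0 < i & #[g j]%g = 2 * i) ->
        odd #|M1| ->
        ((\big[dprod/1]_(j < s) <[g j]>) \x M1)%g = [set: M] ->
        #|Half M| = 2 ^ (2 * s + 1) * #|autK| * #|Aut [set: M]|).
Proof.
split.
  move=> f; split.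
    move/(half_aut_Fsign HabM Hexp) => [b [f' [f'' [u [v [? ? ? ? fE]]]]]].
    by exists f', f'', u, v; split=> //; case: b fE; [left|right].
  move=> [f' [f'' [u [v [? ? ? ? fE]]]]]; apply/(half_aut_Fsign HabM Hexp).
  by case: fE; [exists true|exists false]; exists f', f'', u, v.
rewrite (card_Half HabM Hexp); split.
  move=> oddM; have := @sqrt1_odd M [set: M]%G.
  by rewrite setTI cardsT => /(_ oddM) ->; rewrite cards1 !muln1.
move=> s g M1 _ _ g_even oddM1 defM.
rewrite (card_sqrt1_even_cycles HabM g_even oddM1 defM).
have -> : 2 ^ (2 * s + 1) = 2 * 2 ^ s * 2 ^ s.
  by rewrite -mulnA -expnD addnn -mul2n addn1 expnS.
ring.
Qed.
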